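(* Let $\mathcal{U}$ be a finite set of users, each associated with a base station $b_u$, where each base station $b$ has a finite set of integer-indexed subchannels $\mathcal{C}_b$, and assume the number of users associated with each base station $b$ is at most $|\mathcal{C}_b|$. Some users are ''ongoing'', each having a previously used subchannel $\bar c_u\in\mathcal{C}_{b_u}$, where ongoing users associated with the same base station have pairwise distinct previous subchannels. For each $u$ let $\mathcal{C}^t_u=\{\bar c_u\}$ if $u$ is ongoing and $\mathcal{C}^t_u=\mathcal{C}_{b_u}$ otherwise. Call two distinct users $u,u'$ conflicting if $b_u=b_{u'}$, or if both are ongoing with $\bar c_u\neq\bar c_{u'}$. Let $i^t_{u,u'}$ satisfy $i^t_{u,u}=0$, $i^t_{u,u'}=+\infty$ for conflicting pairs, and $i^t_{u,u'}\in[0,\infty)$ otherwise. Then every optimal solution of (P3): minimize over $\boldsymbol{c}^t$ with $c^t_u\in\mathcal{C}^t_u$ the objective $\frac12\sum_{u,u'\in\mathcal{U}}\max\{0,1-|c^t_u-c^t_{u'}|\}\, i^t_{u,u'}$ (with $0\cdot\infty=0$), is a solution of the subchannel allocation problem: it assigns pairwise different subchannels to users of the same base station, keeps each ongoing user on its previous subchannel, and among all assignments satisfying these requirements it minimizes the total co-channel interference $\frac12\sum_{u,u':\,c_u=c_{u'}} i^t_{u,u'}$.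
   Context: The subchannel allocation problem: assign to each associated user a subchannel of its base station so that users of the same base station use distinct subchannels, ongoing users keep their previous subchannels, and the total pairwise interference among users sharing a subchannel is minimized. *)

From HB Require Import structures.
From mathcomp Require Import all_boot all_order all_algebra.
From mathcomp Require Import finmap.
From mathcomp Require Import reals constructive_ereal.
Set Implicit Arguments. Unset Strict Implicit. Unset Printing Implicit Defensive.
Import Order.TTheory GRing.Theory Num.Theory.
Local Open Scope ring_scope.
Local Open Scope ereal_scope.

(* Users: U : finType; base stations: B : eqType; association bs : U -> B;
   subchannels of base station b: C b : {fset int};
   previous subchannel: prev u = Some cbar if u is ongoing, None otherwise. *)

Definition ongoing (U : Type) (prev : U -> option int) (u : U) : bool :=
  prev u != None.

Definition Ct (U B : Type) (C : B -> {fset int}) (bs : U -> B)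
  (prev : U -> option int) (u : U) : {fset int} :=
  match prev u with
  | Some cb => [fset cb]%fset
  | None => C (bs u)
  end.

Definition conflicting (U : eqType) (B : eqType) (bs : U -> B)
  (prev : U -> option int) (u u' : U) : bool :=
  (u != u') &&
  ((bs u == bs u') ||
   match prev u, prev u' with
   | Some a, Some b => a != b
   | _, _ => false
   end).

(* Objective of (P3); ereal multiplication satisfies 0 * +oo = 0. *)
Definition P3_obj (R : realType) (U : finType) (i : U -> U -> \bar R)
  (c : U -> int) : \bar R :=
  (2^-1)%:E * \sum_(u : U) \sum_(u' : U)
     ((Num.max 0 (1 - `|c u - c u'|)%R)%:~R)%:E * i u u'.

Definition P3_feasible (U B : Type) (C : B -> {fset int}) (bs : U -> B)
  (prev : U -> option int) (c : U -> int) : Prop :=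
  forall u, c u \in Ct C bs prev u.

Definition P3_optimal (R : realType) (U : finType) (B : Type)
  (C : B -> {fset int}) (bs : U -> B) (prev : U -> option int)
  (i : U -> U -> \bar R) (c : U -> int) : Prop :=
  P3_feasible C bs prev c /\
  forall c', P3_feasible C bs prev c' -> P3_obj i c <= P3_obj i c'.

Definition SAP_feasible (U : eqType) (B : eqType) (C : B -> {fset int})
  (bs : U -> B) (prev : U -> option int) (c : U -> int) : Prop :=
  [/\ forall u, c u \in C (bs u),
      forall u u', u != u' -> bs u = bs u' -> c u != c u'
    & forall u cb, prev u = Some cb -> c u = cb].

Definition interference (R : realType) (U : finType) (i : U -> U -> \bar R)
  (c : U -> int) : \bar R :=
  (2^-1)%:E * \sum_(u : U) \sum_(u' : U | c u == c u') i u u'.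

From HB Require Import structures.
From mathcomp Require Import all_boot all_order all_algebra.
From mathcomp Require Import finmap.
From mathcomp Require Import reals constructive_ereal.
Set Implicit Arguments. Unset Strict Implicit. Unset Printing Implicit Defensive.
Import Order.TTheory GRing.Theory Num.Theory.
Local Open Scope ring_scope.
Local Open Scope ereal_scope.

(* On integers the overlap weight max{0, 1 - |c - c'|} is the indicator of
   c = c', so the objective of (P3) is exactly the co-channel interference,
   and every allocation meeting the requirements is feasible for (P3).  An
   optimum of (P3) putting two users of one base station on the same
   subchannel would cost +oo, because such pairs conflict.  But the capacity
   hypothesis gives an allocation meeting the requirements at finite cost:
   at each base station keep the ongoing users on their previous subchannels
   and give the k-th new user the k-th subchannel nobody there used before. *)

Section Extension.
Local Open Scope fset_scope.
Variables (T : finType) (K : choiceType) (x0 : K).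
Variables (A : {set T}) (S : {fset K}) (p : T -> option K).

Definition taken : {fset K} := seq_fset tt (pmap p (enum A)).

Definition newcomers : seq T := [seq u <- enum A | p u == None].

Definition extension (u : T) : K :=
  if p u is Some x then x else nth x0 (S `\` taken) (index u newcomers).

Hypothesis card_A : (#|A| <= #|` S|)%N.
Hypothesis p_in_S : forall u x, u \in A -> p u = Some x -> x \in S.

Lemma taken_subset : taken `<=` S.
Proof.
apply/fsubsetP => x; rewrite seq_fsetE mem_pmap => /mapP[u].
by rewrite mem_enum => uA /esym; apply: p_in_S.
Qed.

Lemma size_newcomers : (size newcomers <= #|` S `\` taken|)%N.
Proof.
rewrite cardfsDS ?taken_subset // leq_subRL ?(fsubset_leq_card taken_subset) //.
have card_taken : (#|` taken| <= count [eta p] (enum A))%N.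
  by rewrite -size_pmap size_seq_fset size_undup.
have split_A : (count [eta p] (enum A) + size newcomers)%N = #|A|.
  rewrite cardE -(count_predC [eta p] (enum A)) size_filter.
  by apply: congr1; apply: eq_count => u /=; case: (p u).
by apply: leq_trans card_A; rewrite -split_A leq_add2r.
Qed.

Lemma extension_Some u x : p u = Some x -> extension u = x.
Proof. by rewrite /extension => ->. Qed.

Lemma mem_newcomers u : (u \in newcomers) = (u \in A) && (p u == None).
Proof. by rewrite mem_filter mem_enum andbC. Qed.

Lemma index_newcomers u :
  u \in A -> p u = None -> (index u newcomers < #|` S `\` taken|)%N.
Proof.
move=> uA pu; apply: leq_trans size_newcomers.
by rewrite index_mem mem_newcomers uA pu.
Qed.

Lemma taken_Some u x : u \in A -> p u = Some x -> x \in taken.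
Proof. by move=> uA pu; rewrite seq_fsetE mem_pmap -pu map_f ?mem_enum. Qed.

Lemma extension_newcomer u :
  u \in A -> p u = None -> extension u \in S `\` taken.
Proof. by move=> uA pu; rewrite /extension pu mem_nth ?index_newcomers. Qed.

Lemma extension_in u : u \in A -> extension u \in S.
Proof.
move=> uA; case pu: (p u) => [x|]; first by rewrite (extension_Some pu); apply: p_in_S pu.
by have := extension_newcomer uA pu; rewrite in_fsetD => /andP[].
Qed.

Hypothesis p_inj :
  {in A &, forall u v x, p u = Some x -> p v = Some x -> u = v}.

Lemma extension_inj : {in A &, injective extension}.
Proof.
have taken_newcomer u v x : u \in A -> v \in A -> p u = Some x -> p v = None ->
    extension u != extension v.
  move=> uA vA pu pv; rewrite (extension_Some pu); apply/eqP => ex.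
  by have := extension_newcomer vA pv; rewrite -ex in_fsetD (taken_Some uA pu).
move=> u v uA vA; case pu: (p u) => [x|]; case pv: (p v) => [y|].
- by rewrite (extension_Some pu) (extension_Some pv) => eq_xy; subst y; apply: p_inj pv.
- by move/eqP; rewrite (negPf (taken_newcomer _ _ _ uA vA pu pv)).
- by move/esym/eqP; rewrite (negPf (taken_newcomer _ _ _ vA uA pv pu)).
rewrite /extension pu pv => /eqP; rewrite nth_uniq ?fset_uniq ?index_newcomers //.
by move/eqP/(index_inj u); apply; rewrite mem_newcomers ?uA ?vA ?pu ?pv.
Qed.
End Extension.

Lemma overlap_weightE (x y : int) :
  (Num.max 0 (1 - `|x - y|) = (x == y)%:R :> int)%R.
Proof.
case: eqP => [->|/eqP neq_xy]; first by rewrite subrr normr0 subr0 max_r.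
by rewrite max_l // subr_le0 -gtz0_ge1 normr_gt0 subr_eq0.
Qed.

Lemma P3_objE (R : realType) (U : finType) (i : U -> U -> \bar R) (c : U -> int) :
  P3_obj i c = interference i c.
Proof.
rewrite /P3_obj /interference; congr (_ * _); apply: eq_bigr => u _.
rewrite [RHS]big_mkcond; apply: eq_bigr => u' _.
by rewrite overlap_weightE; case: eqP; rewrite ?mul1e ?mul0e.
Qed.

Section Allocation.
Variables (R : realType) (U : finType) (B : eqType).
Variables (bs : U -> B) (C : B -> {fset int}) (prev : U -> option int).

Lemma SAP_feasible_P3_feasible c :
  SAP_feasible C bs prev c -> P3_feasible C bs prev c.
Proof.
move=> [c_in_C _ keep_prev] u; rewrite /Ct; case pu: (prev u) => [cb|] //.
by rewrite (keep_prev u cb pu) in_fset1.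
Qed.

Hypothesis prev_in_C : forall u cb, prev u = Some cb -> cb \in C (bs u).

Lemma P3_feasible_SAP_feasible c :
  P3_feasible C bs prev c ->
  (forall u u', u != u' -> bs u = bs u' -> c u != c u') ->
  SAP_feasible C bs prev c.
Proof.
move=> c_in_Ct distinct; split=> // [u|u cb pu].
  by have := c_in_Ct u; rewrite /Ct; case pu: (prev u) => // /fset1P ->; apply: prev_in_C.
by have := c_in_Ct u; rewrite /Ct pu => /fset1P.
Qed.

Hypothesis capacity : forall b, (#|[set u | bs u == b]| <= #|` C b|)%N.
Hypothesis prev_distinct : forall u u' cb cb', u != u' -> bs u = bs u' ->
  prev u = Some cb -> prev u' = Some cb' -> cb != cb'.

Definition greedy_allocation (u : U) : int :=
  extension 0%R [set v | bs v == bs u] (C (bs u)) prev u.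

Lemma greedy_allocation_SAP_feasible : SAP_feasible C bs prev greedy_allocation.
Proof.
have prev_in_station u v x : v \in [set w | bs w == bs u] -> prev v = Some x ->
    x \in C (bs u).
  by rewrite inE => /eqP <-; apply: prev_in_C.
have prev_inj u : {in [set w | bs w == bs u] &,
    forall v w x, prev v = Some x -> prev w = Some x -> v = w}.
  move=> v w; rewrite !inE => /eqP bv /eqP bw x pv pw; apply/eqP/negPn/negP => nvw.
  by have := prev_distinct nvw (etrans bv (esym bw)) pv pw; rewrite eqxx.
split=> [u|u u' nuu' buu'|u cb pu]; last exact: extension_Some.
  by apply: (extension_in _ (capacity _) (prev_in_station u)); rewrite inE.
rewrite /greedy_allocation -buu'; apply: contra nuu' => /eqP.
by move/(extension_inj (capacity _) (prev_in_station u) (prev_inj u)) => -> //; rewrite inE buu'.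
Qed.

Variable i : U -> U -> \bar R.
Hypothesis i_diag : forall u, i u u = 0.
Hypothesis i_conflicting : forall u u', conflicting bs prev u u' -> i u u' = +oo.
Hypothesis i_finite : forall u u', u != u' -> ~~ conflicting bs prev u u' ->
  exists r : R, (0 <= r)%R /\ i u u' = r%:E.

Lemma i_ge0 u u' : 0 <= i u u'.
Proof.
have [<-|nuu'] := eqVneq u u'; first by rewrite i_diag.
case cuu': (conflicting bs prev u u'); first by rewrite i_conflicting ?leey.
by have [r [r_ge0 ->]] := i_finite nuu' (negbT cuu').
Qed.

Lemma SAP_feasible_not_conflicting c u u' : SAP_feasible C bs prev c ->
  u != u' -> c u = c u' -> ~~ conflicting bs prev u u'.
Proof.
move=> [_ distinct keep_prev] nuu' cuu'; rewrite /conflicting nuu' /=.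
apply/norP; split.
  by apply/eqP => buu'; move: (distinct u u' nuu' buu'); rewrite cuu' eqxx.
case pu: (prev u) => [a|] //; case pu': (prev u') => [a'|] //.
by rewrite -(keep_prev u a pu) -(keep_prev u' a' pu') cuu' eqxx.
Qed.

Lemma interference_fin_num c :
  SAP_feasible C bs prev c -> interference i c \is a fin_num.
Proof.
move=> c_SAP; rewrite /interference fin_numM //.
apply/sum_fin_numP => u _ _; apply/sum_fin_numP => u' _ /eqP cuu'.
have [<-|nuu'] := eqVneq u u'; first by rewrite i_diag.
by have [r [_ ->]] := i_finite nuu' (SAP_feasible_not_conflicting c_SAP nuu' cuu').
Qed.

Lemma interference_eqy c u u' :
  u != u' -> bs u = bs u' -> c u = c u' -> interference i c = +oo.
Proof.
move=> nuu' buu' cuu'.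
have i_uu' : i u u' = +oo by rewrite i_conflicting // /conflicting nuu' buu' eqxx.
rewrite /interference; suff -> : \sum_(v : U) \sum_(v' : U | c v == c v') i v v' = +oo.
  by rewrite gt0_muley // lte_fin invr_gt0 ltr0n.
have ge0_neqNy (x : \bar R) : 0 <= x -> x != -oo by case: x.
apply/esum_eqyP; first by move=> v _; rewrite ge0_neqNy ?sume_ge0 // => *; apply: i_ge0.
exists u; split; rewrite ?mem_index_enum //.
apply/esum_eqyP; first by move=> v _; rewrite ge0_neqNy ?i_ge0.
by exists u'; rewrite mem_index_enum cuu' eqxx i_uu'.
Qed.

End Allocation.

Theorem proposition2 (R : realType) (U : finType) (B : eqType)
  (bs : U -> B) (C : B -> {fset int}) (prev : U -> option int)
  (i : U -> U -> \bar R)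
  (hcap : forall b : B, (#|[set u : U | bs u == b]| <= #|` C b|)%N)
  (hprev : forall u cb, prev u = Some cb -> cb \in C (bs u))
  (hprev_dist : forall u u' cb cb', u != u' -> bs u = bs u' ->
      prev u = Some cb -> prev u' = Some cb' -> cb != cb')
  (hii : forall u, i u u = 0)
  (hconf : forall u u', conflicting bs prev u u' -> i u u' = +oo)
  (hfin : forall u u', u != u' -> ~~ conflicting bs prev u u' ->
      exists r : R, (0 <= r)%R /\ i u u' = r%:E)
  (c : U -> int) :
  P3_optimal C bs prev i c ->
  SAP_feasible C bs prev c /\
  (forall c', SAP_feasible C bs prev c' -> interference i c <= interference i c').
Proof.
move=> [c_P3 c_opt].
have c_min c' : SAP_feasible C bs prev c' -> interference i c <= interference i c'.
  by move=> c'_SAP; rewrite -!P3_objE; apply/c_opt/SAP_feasible_P3_feasible.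
split=> //; apply: P3_feasible_SAP_feasible => // u u' nuu' buu'; apply/eqP => cuu'.
have c0_SAP := greedy_allocation_SAP_feasible hprev hcap hprev_dist.
have := c_min _ c0_SAP; rewrite (interference_eqy hii hconf hfin nuu' buu' cuu').
rewrite leye_eq => /eqP c0_eqy.
by have := interference_fin_num hii hfin c0_SAP; rewrite c0_eqy.
Qed.
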